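(* Let $\Omega\subseteq\mathbb{R}^n$ be open and convex, let $f:\Omega\to\mathbb{R}$ be convex and differentiable with $\nabla f$ Lipschitz continuous with constant $L$ (extend $f$ by $+\infty$ outside $\Omega$), let $g:\mathbb{R}^n\to\mathbb{R}\cup\{+\infty\}$ be convex with closed sublevel sets, and let $h=f+g$ have compact sublevel sets and $h^\star=\inf_x h(x)<\infty$. Run the oracle-structured minimization method (described in the context) from $x^0\in\Omega$, producing iterates $x^k$ and tentative steps $v^k=x^{k+1/2}-x^k$. Then $h(x^{k+1})\le h(x^k)$ for all $k$ and $v^k\to 0$ as $k\to\infty$.
   Context: Oracle-structured minimization method (OSMM). Fixed parameters: memory $M\ge1$ (integer), $\alpha,\beta\in(0,1)$, $\tau_{\min}>0$, $0<\mu_{\min}\le\mu_{\max}$, $\gamma_{\rm dec}\in(0,1)$, $\gamma_{\rm inc}>1$, and an initial $\mu_0\in[\mu_{\min},\mu_{\max}]$. There is a constant $C$ and, for each $k$, a symmetric positive semidefinite matrix $H_k$ with $\|H_k\|_2\le C$ (otherwise arbitrary, e.g. a quasi-Newton curvature estimate). For $k=0,1,2,\dots$: (1) $l_k(x)=\max_{i=\max\{0,k-M+1\},\dots,k}\big(f(x^i)+\nabla f(x^i)^T(x-x^i)\big)$; $\tau_k=\operatorname{Tr}(H_k)/n$; $\lambda_k=\mu_k(\tau_k+\tau_{\min})$. (2) $x^{k+1/2}=\operatorname*{argmin}_x\big(l_k(x)+g(x)+\tfrac12(x-x^k)^T(H_k+\lambda_kI)(x-x^k)\big)$, $v^k=x^{k+1/2}-x^k$.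 (3) With $\phi_k(t)=f(x^k+tv^k)+t\,g(x^{k+1/2})+(1-t)g(x^k)$ for $t\in[0,1]$, let $t_k=\beta^j$ where $j$ is the smallest nonnegative integer with $\phi_k(t_k)\le h(x^k)-\frac{\alpha t_k}{2}(v^k)^T(H_k+\lambda_kI)v^k$; set $x^{k+1}=x^k+t_kv^k$. (4) $\mu_{k+1}=\max\{\gamma_{\rm dec}\mu_k,\mu_{\min}\}$ if $t_k=1$, and $\mu_{k+1}=\min\{\gamma_{\rm inc}\mu_k,\mu_{\max}\}$ if $t_k<1$. *)

From HB Require Import structures.
From mathcomp Require Import all_boot all_order all_algebra.
From mathcomp Require Import all_classical all_reals all_analysis.
Set Implicit Arguments.
Unset Strict Implicit.
Unset Printing Implicit Defensive.
Import Order.TTheory GRing.Theory Num.Theory.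
Import numFieldNormedType.Exports.
Local Open Scope classical_set_scope.
Local Open Scope ring_scope.

Section OSMM.
Variables (R : realType) (n : nat).
Local Notation vec := 'cV[R]_n.

Definition dotv (u v : vec) : R := \sum_(i < n) u i 0 * v i 0.
Definition enorm (u : vec) : R := Num.sqrt (dotv u u).
Definition qform (A : 'M[R]_n) (v : vec) : R := dotv v (A *m v).

Definition fext (Om : set vec) (f : vec -> R) (x : vec) : \bar R :=
  if x \in Om then (f x)%:E else +oo%E.

Definition hobj (Om : set vec) (f : vec -> R) (g : vec -> \bar R) (x : vec) : \bar R :=
  (fext Om f x + g x)%E.

Definition convex_on (Om : set vec) : Prop :=
  forall (x y : vec) (t : R), Om x -> Om y -> 0 <= t <= 1 -> Om (t *: x + (1 - t) *: y).

Definition convex_fun_on (Om : set vec) (f : vec -> R) : Prop :=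
  forall (x y : vec) (t : R), Om x -> Om y -> 0 <= t <= 1 ->
    f (t *: x + (1 - t) *: y) <= t * f x + (1 - t) * f y.

Definition convex_efun (g : vec -> \bar R) : Prop :=
  forall (x y : vec) (t : R), 0 < t < 1 ->
    (g (t *: x + (1 - t) *: y)%R <= t%:E * g x + (1 - t)%R%:E * g y)%E.

(* cutting-plane model l_k(y) = max_{i = max(0,k-M+1)..k} f(x^i) + grad f(x^i)^T (y - x^i) *)
Definition affine_cut (f : vec -> R) (gradf : vec -> vec) (xs : nat -> vec) (i : nat) (y : vec) : R :=
  f (xs i) + dotv (gradf (xs i)) (y - xs i).

Definition cutmodel (M : nat) (f : vec -> R) (gradf : vec -> vec) (xs : nat -> vec)
  (k : nat) (y : vec) : R :=
  \big[Num.max/affine_cut f gradf xs k y]_(k.+1 - M <= i < k.+1) affine_cut f gradf xs i y.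

Definition tauk (A : 'M[R]_n) : R := \tr A / n%:R.
Definition lambdak (tau_min mu : R) (A : 'M[R]_n) : R := mu * (tauk A + tau_min).
Definition regmx (tau_min mu : R) (A : 'M[R]_n) : 'M[R]_n := A + (lambdak tau_min mu A)%:M.

(* The OSMM iteration, given the data of the problem, the parameters,
   the curvature matrices H and the generated sequences:
   x k = x^k, xh k = x^{k+1/2}, mu k = mu_k, t k = t_k. *)
Definition osmm_run (Om : set vec) (f : vec -> R) (gradf : vec -> vec) (g : vec -> \bar R)
  (M : nat) (alpha beta tau_min mu_min mu_max gdec ginc : R)
  (H : nat -> 'M[R]_n) (x xh : nat -> vec) (mu t : nat -> R) : Prop :=
  forall k : nat,
    let A := regmx tau_min (mu k) (H k) in
    let v := xh k - x k in
    let subobj := fun y : vec =>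
      ((cutmodel M f gradf x k y + qform A (y - x k) / 2)%:E + g y)%E in
    let phi := fun s : R =>
      (fext Om f (x k + s *: v)%R + s%:E * g (xh k) + (1 - s)%R%:E * g (x k))%E in
    let armijo := fun s : R =>
      (phi s <= hobj Om f g (x k) - (alpha * s / 2 * qform A v)%:E)%E in
    [/\
        (forall y, (subobj (xh k) <= subobj y)%E),
        (exists j : nat, t k = beta ^+ j /\ armijo (beta ^+ j) /\
            forall i : nat, (i < j)%N -> ~ armijo (beta ^+ i)),
        x k.+1 = x k + t k *: v &
        mu k.+1 = (if t k == 1 then Num.max (gdec * mu k) mu_min
                   else Num.min (ginc * mu k) mu_max)].

End OSMM.

(* Testing the optimality of x^{k+1/2} against the midpoint of [x^k, x^{k+1/2}] in its
   own subproblem, and using that the cutting-plane model is convex, lies below f at x^k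
   and above the latest linearization at x^{k+1/2}, gives
     grad f(x^k)^T v^k + g(x^{k+1/2}) - g(x^k) <= -3/4 v^k^T (H_k + lambda_k I) v^k.
   With the descent lemma for the Lipschitz gradient, every step s below a fixed threshold
   then passes the Armijo test, so t_k is bounded away from 0 and h decreases by at least
   c |v^k|^2 per iteration.  Compact sublevel sets make h bounded below, hence the
   decrease is summable and v^k -> 0.  All iterates stay in Omega because Omega is open
   and the sublevel sets of h are closed. *)

From HB Require Import structures.
From mathcomp Require Import all_boot all_order all_algebra.
From mathcomp Require Import all_classical all_reals all_analysis.
From mathcomp Require Import ring lra.
Import Order.TTheory GRing.Theory Num.Theory.
Import numFieldNormedType.Exports.
Local Open Scope classical_set_scope.
Local Open Scope ring_scope.
Set Implicit Arguments.
Unset Strict Implicit.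
Unset Printing Implicit Defensive.

Section Euclidean.
Variables (R : realType) (n : nat).
Implicit Types (u v w : 'cV[R]_n) (s : R).

Lemma dotvC u w : dotv u w = dotv w u.
Proof. by apply: eq_bigr => i _; rewrite mulrC. Qed.

Lemma dotvDl u v w : dotv (u + v) w = dotv u w + dotv v w.
Proof. by rewrite /dotv -big_split; apply: eq_bigr => i _; rewrite !mxE mulrDl. Qed.

Lemma dotvZl s u w : dotv (s *: u) w = s * dotv u w.
Proof. by rewrite /dotv mulr_sumr; apply: eq_bigr => i _; rewrite !mxE mulrA. Qed.

Lemma dotvNl u w : dotv (- u) w = - dotv u w.
Proof. by rewrite -scaleN1r dotvZl mulN1r. Qed.

Lemma dotvBl u v w : dotv (u - v) w = dotv u w - dotv v w.
Proof. by rewrite dotvDl dotvNl. Qed.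

Lemma dotvDr u v w : dotv w (u + v) = dotv w u + dotv w v.
Proof. by rewrite dotvC dotvDl !(dotvC w). Qed.

Lemma dotvZr s u w : dotv w (s *: u) = s * dotv w u.
Proof. by rewrite dotvC dotvZl dotvC. Qed.

Lemma dotvNr u w : dotv w (- u) = - dotv w u.
Proof. by rewrite dotvC dotvNl dotvC. Qed.

Lemma dotvBr u v w : dotv w (u - v) = dotv w u - dotv w v.
Proof. by rewrite dotvC dotvBl !(dotvC w). Qed.

Lemma dotvv_ge0 u : 0 <= dotv u u.
Proof. by apply: sumr_ge0 => i _; rewrite -expr2 sqr_ge0. Qed.

Lemma dotvv_eq0 u : dotv u u = 0 -> u = 0.
Proof.
move/eqP; rewrite psumr_eq0 => [/allP u0|i _]; last by rewrite -expr2 sqr_ge0.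
apply/matrixP => i j; rewrite (ord1 j) mxE.
by have /implyP/(_ isT) := u0 i (mem_index_enum i); rewrite mulf_eq0 orbb => /eqP.
Qed.

Lemma enorm_ge0 u : 0 <= enorm u.
Proof. exact: sqrtr_ge0. Qed.

Lemma enorm_sqr u : enorm u ^+ 2 = dotv u u.
Proof. by rewrite sqr_sqrtr // dotvv_ge0. Qed.

Lemma enormZ s u : enorm (s *: u) = `|s| * enorm u.
Proof. by rewrite /enorm dotvZl dotvZr mulrA sqrtrM -?expr2 ?sqr_ge0 // sqrtr_sqr. Qed.

Lemma dotv_sqr_le u w : dotv u w ^+ 2 <= dotv u u * dotv w w.
Proof.
have [w0|wpos] := eqVneq (dotv w w) 0.
  have -> : dotv u w = 0 by rewrite (dotvv_eq0 w0) /dotv big1 // => i _; rewrite mxE mulr0.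
  by rewrite w0 expr0n mulr0.
have w_gt0 : 0 < dotv w w by rewrite lt0r wpos dotvv_ge0.
have := dotvv_ge0 (dotv w w *: u - dotv u w *: w).
rewrite !(dotvBl, dotvBr, dotvZl, dotvZr) (dotvC w u) => sq_ge0.
have : 0 <= dotv w w * (dotv u u * dotv w w - dotv u w ^+ 2).
  by move: sq_ge0; rewrite expr2; nra.
by rewrite pmulr_rge0 // subr_ge0.
Qed.

Lemma normr_dotv_le u w : `|dotv u w| <= enorm u * enorm w.
Proof.
rewrite /enorm -sqrtrM ?dotvv_ge0 // -sqrtr_sqr ler_sqrt ?mulr_ge0 ?dotvv_ge0 //.
exact: dotv_sqr_le.
Qed.

Lemma normr_le_enorm u : `|u| <= enorm u.
Proof.
rewrite [`|u|]mx_normrE; apply: (big_ind (fun r => r <= enorm u)); first exact: enorm_ge0.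
  by move=> a b ha hb; rewrite ge_max ha hb.
move=> [i j] _ /=; rewrite (ord1 j) /enorm -sqrtr_sqr ler_sqrt ?dotvv_ge0 //.
rewrite /dotv (bigD1 i) //= -expr2 lerDl.
by apply: sumr_ge0 => k _; rewrite -expr2 sqr_ge0.
Qed.

End Euclidean.

Section Segments.
Variables (R : realType) (n : nat).
Implicit Types (x y : 'cV[R]_n) (u : R).

Lemma segmentE x y u : x + u *: (y - x) = u *: y + (1 - u) *: x.
Proof. by rewrite scalerBr scalerBl scale1r addrCA addrA. Qed.

Lemma segmentBl x y u : x + u *: (y - x) - x = u *: (y - x).
Proof. by rewrite addrC addKr. Qed.

Lemma convex_on_segment (Om : set 'cV[R]_n) x y u :
  convex_on Om -> Om x -> Om y -> 0 <= u <= 1 -> Om (x + u *: (y - x)).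
Proof. by move=> cO Ox Oy u01; rewrite segmentE; apply: cO. Qed.

(* [convex_efun] only constrains 0 < u < 1; the endpoints hold since 0 * +oo = 0. *)
Lemma convex_efun_le (g : 'cV[R]_n -> \bar R) x y u : convex_efun g -> 0 <= u <= 1 ->
  (g (u *: x + (1 - u) *: y)%R <= u%:E * g x + (1 - u)%:E * g y)%E.
Proof.
move=> cg /andP[u0 u1].
have [->|u_neq0] := eqVneq u 0.
  by rewrite scale0r add0r subr0 scale1r mul0e add0e mul1e.
have [->|u_neq1] := eqVneq u 1.
  by rewrite subrr scale0r addr0 scale1r mul0e adde0 mul1e.
by apply: cg; rewrite !lt_neqAle eq_sym u_neq0 u0 u_neq1 u1.
Qed.

End Segments.

Section LipschitzGradient.
Variables (R : realType) (n : nat) (Om : set 'cV[R]_n) (f : 'cV[R]_n -> R)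
  (gradf : 'cV[R]_n -> 'cV[R]_n) (L : R).
Hypothesis Om_convex : convex_on Om.
Hypothesis f_grad :
  forall y, Om y -> differentiable f y /\ forall w, 'd f y w = dotv (gradf y) w.
Hypothesis gradf_lipschitz :
  forall y z, Om y -> Om z -> enorm (gradf y - gradf z) <= L * enorm (y - z).

Lemma is_derive_along x d s : Om (x + s *: d) ->
  is_derive s 1 (fun u : R => f (x + u *: d)) (dotv (gradf (x + s *: d)) d).
Proof.
move=> Os; have [df dfE] := f_grad Os.
have quotE : (fun h : R => h^-1 *: (f (x + (h *: 1 + s) *: d) - f (x + s *: d)))
    = (fun h : R => h^-1 *: (f (h *: d + (x + s *: d)) - f (x + s *: d))).
  by apply/funext => h; rewrite [h *: 1]mulr1 scalerDl addrCA addrC.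
have dv : derivable (fun u : R => f (x + u *: d)) s 1.
  by rewrite /derivable /= quotE; exact: (diff_derivable (v := d) df).
suff <- : 'D_1 (fun u : R => f (x + u *: d)) s = dotv (gradf (x + s *: d)) d.
  exact: derivableP.
by rewrite /derive /= quotE -dfE -deriveE.
Qed.

Lemma taylor1_error_le y z : Om y -> Om z ->
  `|f z - f y - dotv (gradf y) (z - y)| <= `|L| * dotv (z - y) (z - y).
Proof.
move=> Oy Oz; set d := z - y.
have Oseg u : 0 <= u <= 1 -> Om (y + u *: d) by exact: convex_on_segment.
have D1 (u : R) : u \in `]0, 1[ ->
    is_derive u 1 (fun u : R => f (y + u *: d)) (dotv (gradf (y + u *: d)) d).
  by rewrite in_itv => /andP[u0 u1]; apply: is_derive_along; apply: Oseg; rewrite !ltW.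
have C1 : {within `[0, 1], continuous (fun u : R => f (y + u *: d))}.
  apply: continuous_in_subspaceT => u; rewrite inE /= in_itv /= => u01.
  have /(@ex_derive _ _ _ _ _ _) /derivable1_diffP := is_derive_along (Oseg u u01).
  exact: differentiable_continuous.
have [xi] := MVT ltr01 D1 C1.
rewrite in_itv /= scale0r scale1r addr0 subr0 mulr1 subrKC => /andP[xi0 xi1] ->.
have Oxi : Om (y + xi *: d) by apply: Oseg; rewrite !ltW.
have lip := gradf_lipschitz Oxi Oy.
rewrite addrAC subrr add0r enormZ (ger0_norm (ltW xi0)) in lip.
rewrite -dotvBl (le_trans (normr_dotv_le _ _)) // -enorm_sqr expr2 mulrA.
rewrite ler_wpM2r ?enorm_ge0 // (le_trans lip) // mulrA ler_wpM2r ?enorm_ge0 //.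
by rewrite (le_trans (ler_wpM2r (ltW xi0) (ler_norm L))) // ler_piMr // ltW.
Qed.

Lemma convex_gradient_ineq x y : convex_fun_on Om f -> Om x -> Om y ->
  f x + dotv (gradf x) (y - x) <= f y.
Proof.
move=> cf Ox Oy; set d := y - x; set K := `|L| * dotv d d.
have K0 : 0 <= K by rewrite mulr_ge0 ?dotvv_ge0.
have step s : 0 < s <= 1 -> dotv (gradf x) d <= f y - f x + s * K.
  move=> /andP[s0 s1]; have s01 : 0 <= s <= 1 by rewrite ltW.
  have Os := convex_on_segment Om_convex Ox Oy s01.
  have := taylor1_error_le Ox Os; rewrite segmentBl -/d !(dotvZl, dotvZr) ler_norml.
  move=> /andP[taylor _].
  have := cf _ _ _ Oy Ox s01; rewrite -segmentE -/d => conv.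
  rewrite -(ler_pM2l s0); move: taylor conv; rewrite /K; nra.
apply/ler_addgt0Pr => e e0; set s := Num.min 1 (e / (K + 1)).
have s0 : 0 < s by rewrite lt_min ltr01 divr_gt0 // ltr_pwDr.
have sK : s * K <= e.
  have : s <= e / (K + 1) by rewrite ge_min lexx orbT.
  rewrite ler_pdivlMr ?ltr_pwDr //; nra.
have := step s; rewrite s0 ge_min lexx => /(_ isT); lra.
Qed.

End LipschitzGradient.

Lemma compact_sublevel_lbound (R : realType) (T : topologicalType) (h : T -> \bar R) :
  hausdorff_space T -> (forall c : R, compact [set y | (h y <= c%:E)%E]) ->
  (forall y, h y != -oo%E) -> exists m : R, forall y, (m%:E <= h y)%E.
Proof.
(* A sequence with h (y m) < - m clusters at a point where h = -oo. *)
move=> hT h_cpt h_ninf; apply: contrapT => /forallNP no_lb.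
have /choice [y hy] : forall m : nat, exists y, (h y < (- m%:R)%:E)%E.
  by move=> m; have /existsNP [y /negP] := no_lb (- m%:R); rewrite -ltNge; exists y.
have ev_le c : \forall m \near \oo, (h (y m) <= c%:E)%E.
  near=> m; apply/ltW/(lt_le_trans (hy m)); rewrite lee_fin lerNl.
  by near: m; exact: nbhs_infty_ger.
have [p [_ p_cl]] := h_cpt 0 (y @ \oo) _ (ev_le 0).
have hp_le c : (h p <= c%:E)%E.
  apply: (compact_closed hT (h_cpt c)) => B pB; exact: p_cl (ev_le c) pB.
move: (h_ninf p) hp_le; case: (h p) => [r _ /(_ (r - 1))| _ /(_ 0) |//].
  by rewrite lee_fin; lra.
by rewrite leye_eq.
Unshelve. all: end_near.
Qed.

Section ExtendedObjective.
Variables (R : realType) (n : nat) (Om : set 'cV[R]_n) (f : 'cV[R]_n -> R)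
  (g : 'cV[R]_n -> \bar R).

Lemma fext_in y : Om y -> fext Om f y = (f y)%:E.
Proof. by move=> Oy; rewrite /fext mem_set. Qed.

Lemma fext_out y : ~ Om y -> fext Om f y = +oo%E.
Proof. by move=> Oy; rewrite /fext ifF //; apply/negP; rewrite inE. Qed.

Lemma hobjE y : Om y -> g y \is a fin_num -> hobj Om f g y = (f y + fine (g y))%:E.
Proof. by move=> Oy gy; rewrite /hobj fext_in // -(fineK gy). Qed.

Lemma hobj_fin_num y : hobj Om f g y \is a fin_num -> Om y /\ g y \is a fin_num.
Proof.
rewrite /hobj /fext; case: ifPn => [/set_mem Oy|_]; last by case: (g y).
by case: (g y).
Qed.

Lemma hobj_ninfty y : g y != -oo%E -> hobj Om f g y != -oo%E.
Proof. by rewrite /hobj /fext; case: ifP; case: (g y). Qed.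

End ExtendedObjective.

Section Domain.
Variables (R : realType) (n : nat) (Om : set 'cV[R]_n) (f : 'cV[R]_n -> R)
  (gradf : 'cV[R]_n -> 'cV[R]_n) (L : R) (g : 'cV[R]_n -> \bar R).
Hypothesis Om_open : open Om.
Hypothesis Om_convex : convex_on Om.
Hypothesis f_grad :
  forall y, Om y -> differentiable f y /\ forall w, 'd f y w = dotv (gradf y) w.
Hypothesis gradf_lipschitz :
  forall y z, Om y -> Om z -> enorm (gradf y - gradf z) <= L * enorm (y - z).
Hypothesis g_convex : convex_efun g.
Hypothesis h_closed : forall c : R, closed [set y | (hobj Om f g y <= c%:E)%E].

Let h := hobj Om f g.

Lemma hobj_segment_le p b u : Om p -> g p \is a fin_num -> g b \is a fin_num ->
  0 <= u <= 1 -> Om (p + u *: (b - p)) ->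
  (h (p + u *: (b - p)) <= (f p + `|dotv (gradf p) (b - p)| + `|L| * dotv (b - p) (b - p)
                           + `|fine (g b)| + `|fine (g p)|)%:E)%E.
Proof.
move=> Op gp gb u01 Oz; have /andP[u0 u1] := u01.
have le_norm (w a : R) : 0 <= w <= 1 -> w * a <= `|a|.
  by case/andP=> w0 w1; rewrite (le_trans (ler_wpM2l w0 (ler_norm a))) // ler_piMl.
rewrite /h /hobj fext_in // -addrA EFinD; apply: leeD; rewrite ?lee_fin.
  have := taylor1_error_le Om_convex f_grad gradf_lipschitz Op Oz.
  rewrite segmentBl !(dotvZl, dotvZr) ler_norml => /andP[_].
  have := le_norm _ (dotv (gradf p) (b - p)) u01.
  have D0 : 0 <= `|L| * dotv (b - p) (b - p) by rewrite mulr_ge0 ?dotvv_ge0.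
  have : u * (u * (`|L| * dotv (b - p) (b - p))) <= `|L| * dotv (b - p) (b - p).
    by rewrite (le_trans (ler_wpM2l u0 (ler_piMl D0 u1))) // ler_piMl.
  lra.
rewrite segmentE (le_trans (convex_efun_le _ _ g_convex u01)) //.
rewrite -(fineK gp) -(fineK gb) /= -!EFinM -EFinD lee_fin lerD ?le_norm //.
by rewrite subr_ge0 u1 gerBl.
Qed.

Hypothesis g_ninfty : forall y, g y != -oo%E.

(* h is bounded along the part of [p, b] inside Om, so by closedness the first exit
   point of the segment from Om is still in Om, and openness then contradicts exiting. *)
Lemma g_fin_num_in_Om p b : Om p -> g p \is a fin_num -> g b \is a fin_num -> Om b.
Proof.
move=> Op gp gb; apply: contrapT => Ob.
pose z (u : R) := p + u *: (b - p).
have z_cont : continuous z.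
  move=> u; apply: (@continuousD _ _ _ (fun=> p) (fun u : R => u *: (b - p))).
    exact: cst_continuous.
  exact: scalel_continuous.
pose A := [set u : R | 0 <= u <= 1 /\ ~ Om (z u)].
have A1 : A 1 by split; [rewrite ler01 lexx | rewrite /z scale1r subrKC].
have A_lb : lbound A 0 by move=> u [/andP[]].
have A_has_lb : has_lbound A by exists 0.
pose s := inf A.
have s0 : 0 <= s by apply: lb_le_inf; first by exists 1.
have s1 : s <= 1 by exact: ge_inf.
have Om_below u : 0 <= u < s -> Om (z u).
  case/andP=> u0 us; apply: contrapT => Ozu.
  have : s <= u by apply: ge_inf => //; split; rewrite ?u0 ?(le_trans (ltW us)).
  by rewrite leNgt us.
pose B := f p + `|dotv (gradf p) (b - p)| + `|L| * dotv (b - p) (b - p)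
          + `|fine (g b)| + `|fine (g p)|.
have Oz_s : Om (z s).
  have [->|s_neq0] := eqVneq s 0; first by rewrite /z scale0r addr0.
  have s_gt0 : 0 < s by rewrite lt0r s_neq0.
  have : (h (z s) <= B%:E)%E.
    apply: (closed_cvg (F := s^'-) (u_ := z) _ (@h_closed B)).
      near=> u.
      have u0 : 0 < u by near: u; exact: nbhs_left_gt.
      have us : u < s by near: u; exact: nbhs_left_lt.
      apply: hobj_segment_le => //; first by rewrite (ltW u0) (le_trans (ltW us)).
      by apply: Om_below; rewrite ltW.
    exact/cvg_at_left_filter/z_cont.
  apply: contraPP => Ozs; rewrite /h /hobj fext_out // addye //.
have /z_cont/nbhs_ballP[e e0 z_ball] : nbhs (z s) Om by apply: open_nbhs_nbhs.
have [a Aa ae] : exists2 a, A a & a < s + e by apply: inf_lt; [exists 1 | rewrite ltrDl].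
have sa : s <= a by exact: ge_inf.
case: Aa => _; apply; apply: z_ball; rewrite /ball /= ler0_norm ?subr_le0 //; lra.
Unshelve. all: end_near.
Qed.

End Domain.

Section QuadraticForm.
Variables (R : realType) (n : nat).
Implicit Types (A : 'M[R]_n) (v : 'cV[R]_n) (c : R).

Lemma qformD_scalar A c v : qform (A + c%:M) v = qform A v + c * dotv v v.
Proof. by rewrite /qform mulmxDl mul_scalar_mx dotvDr dotvZr. Qed.

Lemma qformZ A c v : qform A (c *: v) = c ^+ 2 * qform A v.
Proof. by rewrite /qform -scalemxAr dotvZl dotvZr mulrA expr2. Qed.

Lemma mxtrace_ge0 A : (forall v, 0 <= qform A v) -> 0 <= \tr A.
Proof.
move=> A_psd; apply: sumr_ge0 => i _; have := A_psd (delta_mx i 0).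
rewrite /qform /dotv (bigD1 i) //= big1 ?addr0 => [|j ji]; last first.
  by rewrite mxE (negbTE ji) mul0r.
rewrite !mxE eqxx mul1r (bigD1 i) //= big1 ?addr0 => [|j ji]; last first.
  by rewrite mxE (negbTE ji) andFb mulr0.
by rewrite mxE !eqxx mulr1.
Qed.

End QuadraticForm.

Section CuttingPlaneModel.
Variables (R : realType) (n M : nat) (f : 'cV[R]_n -> R) (gradf : 'cV[R]_n -> 'cV[R]_n)
  (xs : nat -> 'cV[R]_n).
Implicit Types (a b y : 'cV[R]_n) (u : R).

Lemma affine_cut_segment i a b u :
  affine_cut f gradf xs i (a + u *: (b - a)) =
  (1 - u) * affine_cut f gradf xs i a + u * affine_cut f gradf xs i b.
Proof.
rewrite /affine_cut.
have -> : a + u *: (b - a) - xs i = (a - xs i) + u *: ((b - xs i) - (a - xs i)).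
  by rewrite opprB addrA subrK addrAC.
by rewrite !(dotvDr, dotvNr, dotvZr); ring.
Qed.

Lemma cutmodel_ge_cut k y : affine_cut f gradf xs k y <= cutmodel M f gradf xs k y.
Proof.
apply: (big_rec (fun r => affine_cut f gradf xs k y <= r)) => // i r _ le_r.
by rewrite le_max le_r orbT.
Qed.

Lemma cutmodel_le k y c :
  (forall i, affine_cut f gradf xs i y <= c) -> cutmodel M f gradf xs k y <= c.
Proof.
move=> cut_le; apply: (big_ind (fun r => r <= c)) => // r r' le_r le_r'.
by rewrite ge_max le_r le_r'.
Qed.

Lemma cutmodel_segment_le k a b u : 0 <= u <= 1 ->
  cutmodel M f gradf xs k (a + u *: (b - a)) <=
  (1 - u) * cutmodel M f gradf xs k a + u * cutmodel M f gradf xs k b.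
Proof.
case/andP=> u0 u1; have u0' : 0 <= 1 - u by rewrite subr_ge0.
apply: (@big_ind3 R R R (fun r r' r'' => r <= (1 - u) * r' + u * r'')).
- by rewrite affine_cut_segment.
- move=> r1 r2 r3 s1 s2 s3 le_r le_s; rewrite ge_max; apply/andP; split.
    by rewrite (le_trans le_r) // lerD // ler_wpM2l // le_max lexx.
  by rewrite (le_trans le_s) // lerD // ler_wpM2l // le_max lexx orbT.
- by move=> i _; rewrite affine_cut_segment.
Qed.

End CuttingPlaneModel.

Lemma sufficient_decrease_cvg0 (R : realType) (a b : R ^nat) (c : R) : 0 < c ->
  has_lbound (range a) -> (forall k, 0 <= b k) -> (forall k, a k.+1 + c * b k <= a k) ->
  b @ \oo --> 0.
Proof.
move=> c_gt0 a_lb b_ge0 a_dec.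
have a_noninc : nonincreasing_seq a.
  apply/nonincreasing_seqP => k; rewrite (le_trans _ (a_dec k)) // lerDl.
  exact: mulr_ge0 (ltW c_gt0) (b_ge0 k).
have a_cvg := nonincreasing_cvgn a_noninc a_lb.
have diff_cvg : (fun k => (a k - a k.+1) / c) @ \oo --> 0.
  rewrite -(mul0r c^-1) -(subrr (inf (range a))).
  by apply: cvgM; [apply: cvgB; rewrite ?cvg_shiftS | exact: cvg_cst].
apply: (squeeze_cvgr _ (cvg_cst 0) diff_cvg); near=> k.
by rewrite b_ge0 /= ler_pdivlMr //; have := a_dec k; lra.
Unshelve. all: end_near.
Qed.

Lemma cvg0_dotvv (R : realType) (n : nat) (v : nat -> 'cV[R]_n) :
  (fun k => dotv (v k) (v k)) @ \oo --> 0 -> v @ \oo --> (0 : 'cV[R]_n).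
Proof.
move=> dotv_cvg; apply: norm_cvg0.
have enorm_cvg : (fun k => enorm (v k)) @ \oo --> 0.
  by rewrite -sqrtr0; apply: continuous_cvg dotv_cvg; exact: sqrt_continuous.
apply: (squeeze_cvgr _ (cvg_cst 0) enorm_cvg); near=> k.
by rewrite normr_ge0 normr_le_enorm.
Unshelve. all: end_near.
Qed.

Section OSMMRun.
Variables (R : realType) (n : nat) (Om : set 'cV[R]_n) (f : 'cV[R]_n -> R)
  (gradf : 'cV[R]_n -> 'cV[R]_n) (L : R) (g : 'cV[R]_n -> \bar R)
  (M : nat) (alpha beta tau_min mu_min mu_max gdec ginc : R)
  (H : nat -> 'M[R]_n) (x xh : nat -> 'cV[R]_n) (mu t : nat -> R).
Hypothesis Om_open : open Om.
Hypothesis Om_convex : convex_on Om.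
Hypothesis f_convex : convex_fun_on Om f.
Hypothesis f_grad :
  forall y, Om y -> differentiable f y /\ forall w, 'd f y w = dotv (gradf y) w.
Hypothesis gradf_lipschitz :
  forall y z, Om y -> Om z -> enorm (gradf y - gradf z) <= L * enorm (y - z).
Hypothesis g_ninfty : forall y, g y != -oo%E.
Hypothesis g_convex : convex_efun g.
Hypothesis h_compact : forall c : R, compact [set y | (hobj Om f g y <= c%:E)%E].
Hypothesis h_proper : (ereal_inf (range (hobj Om f g)) < +oo)%E.
Hypotheses (alpha_gt0 : 0 < alpha) (alpha_lt1 : alpha < 1).
Hypotheses (beta_gt0 : 0 < beta) (beta_lt1 : beta < 1).
Hypotheses (tau_min_gt0 : 0 < tau_min) (mu_min_gt0 : 0 < mu_min).
Hypotheses (mu_min_le_max : mu_min <= mu_max) (ginc_gt1 : 1 < ginc).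
Hypothesis mu0_ge_min : mu_min <= mu 0.
Hypothesis H_psd : forall k w, 0 <= qform (H k) w.
Hypothesis x0_in_Om : Om (x 0).
Hypothesis run :
  osmm_run Om f gradf g M alpha beta tau_min mu_min mu_max gdec ginc H x xh mu t.

Let h := hobj Om f g.
Let A k := regmx tau_min (mu k) (H k).
Let v k := xh k - x k.
Let lambda_min := mu_min * tau_min.
(* Every step s with s * kappa <= lambda_min passes the Armijo test, so backtracking
   stops at t_k >= t_min; the + 1 keeps kappa positive when L = 0. *)
Let kappa := 4 * (`|L| + 1).
Let t_min := Num.min 1 (beta * lambda_min / kappa).
Let armijo k s := (fext Om f (x k + s *: v k)%R + s%:E * g (xh k) + (1 - s)%:E * g (x k)
                   <= h (x k) - (alpha * s / 2 * qform (A k) (v k))%:E)%E.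

Lemma mu_ge_min k : mu_min <= mu k.
Proof.
elim: k => [//|k IH]; have [_ _ _ ->] := run k.
case: ifP => _; first by rewrite le_max lexx orbT.
have mu_ge0 : 0 <= mu k := le_trans (ltW mu_min_gt0) IH.
by rewrite le_min mu_min_le_max andbT (le_trans IH) // ler_peMl // ltW.
Qed.

Lemma qform_A_ge k w : lambda_min * dotv w w <= qform (A k) w.
Proof.
rewrite /A /regmx qformD_scalar -[X in X <= _]add0r lerD ?H_psd // ler_wpM2r ?dotvv_ge0 //.
have tau_ge0 : 0 <= tauk (H k) by rewrite divr_ge0 ?mxtrace_ge0.
by apply: ler_pM; [exact: ltW | exact: ltW | exact: mu_ge_min | rewrite lerDr].
Qed.

Lemma qform_A_ge0 k w : 0 <= qform (A k) w.
Proof.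
apply: le_trans (qform_A_ge k w).
by rewrite !mulr_ge0 ?dotvv_ge0 ?ltW.
Qed.

Lemma step_in01 k : 0 <= t k <= 1.
Proof. by have [_ [j [-> _]] _ _] := run k; rewrite exprn_ge0 ?exprn_ile1 // ltW. Qed.

Lemma dom_h_point : exists2 y0, Om y0 & g y0 \is a fin_num.
Proof.
have [_ [y0 _ <-] hy0] := ereal_inf_lt h_proper.
have /hobj_fin_num[] : hobj Om f g y0 \is a fin_num.
  by rewrite fin_numElt hy0 andbT ltNye hobj_ninfty.
by exists y0.
Qed.

Lemma g_xh_fin_num k : g (xh k) \is a fin_num.
Proof.
have [y0 _ /EFin_fin_numP[gy0 gy0E]] := dom_h_point.
have [opt _ _ _] := run k.
rewrite fin_numE g_ninfty /=; apply/negP => /eqP gxh_oo.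
by have := opt y0; rewrite gxh_oo gy0E -EFinD addey // leye_eq.
Qed.

Lemma xh_in_Om k : Om (xh k).
Proof.
have [y0 Oy0 gy0] := dom_h_point.
have h_closed c : closed [set y | (hobj Om f g y <= c%:E)%E].
  by apply: compact_closed; [exact: norm_hausdorff | exact: h_compact].
exact: (g_fin_num_in_Om Om_open Om_convex f_grad gradf_lipschitz g_convex h_closed g_ninfty
  Oy0 gy0 (g_xh_fin_num k)).
Qed.

Lemma x_in_Om k : Om (x k).
Proof.
elim: k => [//|k IH]; have [_ _ -> _] := run k.
by apply: convex_on_segment => //; [exact: xh_in_Om | exact: step_in01].
Qed.

Lemma subproblem_decrease k gx gh : g (x k) = gx%:E -> g (xh k) = gh%:E ->
  dotv (gradf (x k)) (v k) + gh - gx <= - (3 / 4) * qform (A k) (v k).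
Proof.
move=> gxE ghE; have [opt _ _ _] := run k.
have half : 0 <= (1 / 2 : R) <= 1 by rewrite divr_ge0 //= ler_pdivrMr // mul1r ler1n.
pose y := x k + (1 / 2) *: (xh k - x k).
have gy : (g y <= (1 / 2 * gh + (1 - 1 / 2) * gx)%:E)%E.
  rewrite /y segmentE; apply: le_trans (convex_efun_le _ _ g_convex half) _.
  by rewrite ghE gxE -!EFinM -EFinD.
have := le_trans (opt y) (leeD2l _ gy).
rewrite ghE -!EFinD lee_fin /y segmentBl qformZ -/(v k) -/(A k).
have := cutmodel_segment_le M f gradf x k (x k) (xh k) half.
have : cutmodel M f gradf x k (x k) <= f (x k).
  apply: cutmodel_le => i.
  exact: (convex_gradient_ineq Om_convex f_grad gradf_lipschitz f_convex
    (x_in_Om i) (x_in_Om k)).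
have := cutmodel_ge_cut M f gradf x k (xh k); rewrite /affine_cut -/(v k).
rewrite expr2; lra.
Qed.

Lemma armijo_small_step k s gx : g (x k) = gx%:E -> 0 < s <= 1 -> s * kappa <= lambda_min ->
  armijo k s.
Proof.
move=> gxE /andP[s_gt0 s_le1] s_small; have /EFin_fin_numP[gh ghE] := g_xh_fin_num k.
have Os : Om (x k + s *: v k).
  by apply: convex_on_segment => //; [exact: x_in_Om | exact: xh_in_Om | rewrite ltW].
rewrite /armijo /h /hobj (fext_in f Os) (fext_in f (x_in_Om k)) ghE gxE.
rewrite -!EFinM -!EFinD lee_fin.
have := taylor1_error_le Om_convex f_grad gradf_lipschitz (x_in_Om k) Os.
rewrite segmentBl -/(v k) !(dotvZl, dotvZr) ler_norml => /andP[_ taylor].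
have := ler_wpM2l (ltW s_gt0) (subproblem_decrease gxE ghE).
have := ler_piMl (mulr_ge0 (ltW s_gt0) (qform_A_ge0 k (v k))) (ltW alpha_lt1).
set q := qform (A k) (v k); set D := dotv (v k) (v k) in taylor *.
have D_ge0 : 0 <= D by exact: dotvv_ge0.
have q_ge : lambda_min * D <= q by exact: qform_A_ge.
have Ls : `|L| * s <= lambda_min / 4 by move: s_small; rewrite /kappa; lra.
have := ler_wpM2r (mulr_ge0 (ltW s_gt0) D_ge0) Ls.
have := ler_wpM2l (ltW s_gt0) q_ge.
lra.
Qed.

Lemma step_ge_min k gx : g (x k) = gx%:E -> t_min <= t k.
Proof.
move=> gxE; have [_ [j [-> [_ no_armijo]]] _ _] := run k.
case: j no_armijo => [|j] no_armijo; first by rewrite expr0 ge_min lexx.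
have kappa_gt0 : 0 < kappa by rewrite /kappa; have := normr_ge0 L; lra.
have : lambda_min < beta ^+ j * kappa.
  rewrite ltNge; apply/negP => small; apply: (no_armijo j (ltnSn j)).
  by apply: armijo_small_step gxE _ small; rewrite exprn_gt0 //= exprn_ile1 // ltW.
rewrite exprS ge_min ler_pdivrMr // -mulrA => /ltW lt_bj.
by rewrite ler_wpM2l ?orbT // ltW.
Qed.

Lemma h_next_le k :
  (h (x k.+1) <= h (x k) - (alpha * t k / 2 * qform (A k) (v k))%:E)%E.
Proof.
have [_ [j [tE [armijo_j _]]] -> _] := run k.
have := step_in01 k; rewrite tE => t01; apply: le_trans armijo_j.
by rewrite /h /hobj -addeA leeD2l // segmentE convex_efun_le.
Qed.

Lemma g_next_fin_num k : g (x k.+1) \is a fin_num.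
Proof.
have [_ [j [tE [_ no_armijo]]] -> _] := run k.
have [gx_oo|] := eqVneq (g (x k)) +oo%E.
  (* then the right-hand side of the Armijo test is +oo, so it accepts t = 1 *)
  case: j tE no_armijo => [|j] tE no_armijo.
    by rewrite tE expr0 scale1r subrKC g_xh_fin_num.
  exfalso; apply: (no_armijo 0%N) => //.
  by rewrite expr0 /hobj gx_oo (fext_in f (x_in_Om k)) addey // addye // leey.
move=> gx_neq; have /EFin_fin_numP[gx gxE] : g (x k) \is a fin_num.
  by rewrite fin_numE g_ninfty.
have /EFin_fin_numP[gh ghE] := g_xh_fin_num k.
have := convex_efun_le (xh k) (x k) g_convex (step_in01 k); rewrite -segmentE.
rewrite ghE gxE -!EFinM -EFinD fin_numE g_ninfty /=; apply: contraTneq => ->.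
by rewrite leye_eq.
Qed.

Lemma h_nonincreasing k : (h (x k.+1) <= h (x k))%E.
Proof.
apply: le_trans (h_next_le k) _; rewrite leeBlDr // leeDl // lee_fin.
have [t0 _] := andP (step_in01 k).
by rewrite !mulr_ge0 ?invr_ge0 ?qform_A_ge0 // ltW.
Qed.

Lemma tentative_step_cvg0 : v @ \oo --> (0 : 'cV[R]_n).
Proof.
pose a k := fine (h (x k.+1)).
have haE k : h (x k.+1) = (a k)%:E.
  by rewrite /a /h (hobjE f (x_in_Om k.+1) (g_next_fin_num k)).
have a_lb : has_lbound (range a).
  have [m hm] : exists m : R, forall y, (m%:E <= h y)%E.
    apply: compact_sublevel_lbound h_compact _; first exact: norm_hausdorff.
    by move=> y; exact: hobj_ninfty.
  by exists m => _ [k _ <-]; rewrite -lee_fin -haE hm.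
have kappa_gt0 : 0 < kappa by rewrite /kappa; have := normr_ge0 L; lra.
have lambda_min_gt0 : 0 < lambda_min by rewrite mulr_gt0.
have t_min_gt0 : 0 < t_min by rewrite lt_min ltr01 divr_gt0 ?mulr_gt0.
pose c := alpha * t_min * lambda_min / 2.
have c_gt0 : 0 < c by rewrite divr_gt0 ?mulr_gt0.
have a_dec k : a k.+1 + c * dotv (v k.+1) (v k.+1) <= a k.
  have /EFin_fin_numP[gx gxE] := g_next_fin_num k.
  have := h_next_le k.+1; rewrite !haE -EFinB lee_fin.
  have : t_min * (lambda_min * dotv (v k.+1) (v k.+1)) <= t k.+1 * qform (A k.+1) (v k.+1).
    apply: ler_pM; [exact: ltW | exact: mulr_ge0 (ltW lambda_min_gt0) (dotvv_ge0 _) |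
                    exact: step_ge_min gxE | exact: qform_A_ge].
  move=> /(ler_wpM2l (divr_ge0 (ltW alpha_gt0) (ler0n R 2))).
  rewrite /c; lra.
rewrite -cvg_shiftS; apply: cvg0_dotvv.
apply: sufficient_decrease_cvg0 c_gt0 a_lb _ a_dec => k; exact: dotvv_ge0.
Qed.

End OSMMRun.

Theorem mainTheorem2 (R : realType) (n : nat)
  (Om : set 'cV[R]_n) (f : 'cV[R]_n -> R) (gradf : 'cV[R]_n -> 'cV[R]_n) (L : R)
  (g : 'cV[R]_n -> \bar R)
  (M : nat) (alpha beta tau_min mu_min mu_max gdec ginc mu0 C : R)
  (H : nat -> 'M[R]_n) (x xh : nat -> 'cV[R]_n) (mu t : nat -> R) :
  (* Omega open and convex *)
  open Om -> convex_on Om ->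
  (* f convex and differentiable on Omega with gradient gradf, L-Lipschitz *)
  convex_fun_on Om f ->
  (forall y, Om y -> differentiable f y /\ forall w, 'd f y w = dotv (gradf y) w) ->
  (forall y z, Om y -> Om z -> enorm (gradf y - gradf z) <= L * enorm (y - z)) ->
  (* g : R^n -> R u {+oo} convex with closed sublevel sets *)
  (forall y, g y != -oo%E) -> convex_efun g ->
  (forall a : R, closed [set y | (g y <= a%:E)%E]) ->
  (* h = f + g has compact sublevel sets and finite infimum *)
  (forall a : R, compact [set y | (hobj Om f g y <= a%:E)%E]) ->
  (ereal_inf (range (hobj Om f g)) < +oo)%E ->
  (* parameters *)
  (0 < M)%N -> 0 < alpha < 1 -> 0 < beta < 1 -> 0 < tau_min ->
  0 < mu_min -> mu_min <= mu_max -> 0 < gdec < 1 -> 1 < ginc ->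
  mu_min <= mu0 <= mu_max ->
  (* curvature matrices: symmetric PSD with spectral norm <= C *)
  (forall k, (H k)^T = H k) ->
  (forall k w, 0 <= qform (H k) w) ->
  (forall k w, enorm (H k *m w) <= C * enorm w) ->
  (* the OSMM run started at x^0 in Omega *)
  Om (x 0%N) -> mu 0%N = mu0 ->
  osmm_run Om f gradf g M alpha beta tau_min mu_min mu_max gdec ginc H x xh mu t ->
  (forall k, (hobj Om f g (x k.+1) <= hobj Om f g (x k))%E) /\
  (fun k => xh k - x k) @ \oo --> (0 : 'cV[R]_n).
Proof.
move=> Om_open Om_convex f_convex f_grad gradf_lipschitz g_ninfty g_convex _ h_compact h_proper
  _ /andP[alpha_gt0 alpha_lt1] /andP[beta_gt0 beta_lt1] tau_min_gt0 mu_min_gt0 mu_min_le_max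
  _ ginc_gt1 /andP[mu0_ge_min _] _ H_psd _ x0_in_Om mu0E run.
rewrite -mu0E in mu0_ge_min.
split=> [k|].
  by apply: h_nonincreasing; last exact: run.
by apply: (tentative_step_cvg0 (L := L)); last exact: run.
Qed.
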